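(* Let $g\ge 3$ be an odd integer and let $m=\frac{g^2+1}{2}$. Let $C_m(\{g\};\{1\})$ be the mixed graph with vertex set $\{x_0,\dots,x_{m-1}\}$ (indices modulo $m$), arc set $\{(x_i,x_{i+g}) : 0\le i\le m-1\}$ and edge set $\{x_ix_{i+1} : 0\le i\le m-1\}$. Then $C_m(\{g\};\{1\})$ is a $[1,2;g]$-mixed graph of order $\frac{g^2+1}{2}$.
   Context: A mixed graph is a finite simple graph that may contain both edges and arcs. A $[z,r;g]$-mixed graph is a mixed graph in which every vertex is the tail of exactly $z$ arcs, the head of exactly $z$ arcs, and is incident with exactly $r$ edges, and whose girth is $g$. Walks traverse edges in either direction and arcs only in their direction; a cycle is a closed walk with no repeated vertices (other than start = end) and no repeated edge or arc; the girth is the length of a shortest cycle. *)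

From mathcomp Require Import all_boot.
Set Implicit Arguments. Unset Strict Implicit. Unset Printing Implicit Defensive.

Section MixedGraphs.
Variable T : finType.

(* A mixed graph on the finite vertex type T: E is the (symmetric) edge
   relation, A the arc relation (A x y = arc from tail x to head y).
   Simplicity: no loops, no pair joined both by an edge and an arc,
   no pair of opposite arcs (these would be an edge). *)
Definition mixed_graph (E A : rel T) : Prop :=
  [/\ symmetric E, irreflexive E, irreflexive A,
      (forall x y, A x y -> ~~ E x y) & (forall x y, A x y -> ~~ A y x)].

Definition cyc_steps (c : seq T) : seq (T * T) := zip c (rot 1 c).

Definition step_ok (E A : rel T) (p : T * T) : bool := E p.1 p.2 || A p.1 p.2.

Definition same_link (E A : rel T) (p q : T * T) : bool :=
  (A p.1 p.2 && (p == q)) || (E p.1 p.2 && ((p == q) || (p == (q.2, q.1)))).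

(* c = [x_0; ...; x_{k-1}] represents the cycle x_0 x_1 ... x_{k-1} x_0 of length k:
   a closed walk with no repeated vertex and no repeated edge or arc. *)
Definition is_cycle (E A : rel T) (c : seq T) : Prop :=
  [/\ 0 < size c, uniq c, all (step_ok E A) (cyc_steps c)
    & pairwise (fun p q => ~~ same_link E A p q) (cyc_steps c)].

Definition girth_is (E A : rel T) (g : nat) : Prop :=
  (exists c, is_cycle E A c /\ size c = g) /\
  (forall c, is_cycle E A c -> g <= size c).

Definition zrg_mixed_graph (E A : rel T) (z r g : nat) : Prop :=
  [/\ mixed_graph E A,
      (forall x, #|[set y | A x y]| = z),
      (forall x, #|[set y | A y x]| = z),
      (forall x, #|[set y | E x y]| = r)
    & girth_is E A g].

End MixedGraphs.

(* C_m({a};{1}) on vertices 'I_m (x_i <-> i) *)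
Definition circ_arc (m a : nat) : rel 'I_m :=
  fun i j => val j == (i + a) %% m.
Definition circ_edge (m : nat) : rel 'I_m :=
  fun i j => (val j == (i + 1) %% m) || (val i == (j + 1) %% m).
Arguments circ_arc m a : clear implicits.
Arguments circ_edge m : clear implicits.

(* An arc adds g to the index and an edge adds or subtracts 1, so a cycle with
   a arcs, p forward and q backward edges satisfies g a + p = q (mod m).  A
   cycle without arcs cannot turn back on an edge, so it runs once around the
   circle and has length m > g.  With m = (g^2+1)/2 and 0 < a + p + q < g the
   congruence forces g a + p = m + q, which fails both for a <= (g-1)/2 (the
   left side is too small) and for a > (g-1)/2 (then a + q >= g).
   The bound is attained by (g-1)/2 arcs 0 -> g -> ... followed by (g+1)/2
   forward edges back to 0. *)

From mathcomp Require Import all_boot zify.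

Set Implicit Arguments.
Unset Strict Implicit.
Unset Printing Implicit Defensive.

Lemma modn_lt_double x m :
  x < 2 * m -> x %% m = if x < m then x else x - m.
Proof.
move=> x_lt; case: ltnP => [|x_ge]; first exact: modn_small.
by rewrite -[in LHS](subnK x_ge) modnDr modn_small; lia.
Qed.

Ltac reduce_mod m := rewrite /=; repeat match goal with
  | |- context [?x %% m] => rewrite (@modn_lt_double x m); [case: ifP => ? | lia]
  end.

Lemma path_rcons_iota (r : rel nat) i n x :
  path r i (rcons (iota i.+1 n) x) = all (fun j => r j j.+1) (iota i n) && r (i + n) x.
Proof.
elim: n i => [|n IHn] i /=; first by rewrite addn0 andbT.
by rewrite IHn addSnnS andbA.
Qed.

Lemma cycle_iota (r : rel nat) i n :
  cycle r (iota i n.+1) = all (fun j => r j j.+1) (iota i n) && r (i + n) i.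
Proof. exact: path_rcons_iota. Qed.

Section CycleSteps.
Variable T : finType.
Implicit Types (c : seq T) (x : T).

Lemma size_cyc_steps c : size (cyc_steps c) = size c.
Proof. by rewrite /cyc_steps size_zip size_rot minnn. Qed.

Lemma nth_cyc_steps x0 c i : i < size c ->
  nth (x0, x0) (cyc_steps c) i = (nth x0 c i, nth x0 c ((i + 1) %% size c)).
Proof.
move=> i_lt; rewrite /cyc_steps nth_zip ?size_rot //; congr (_, _).
case: c i_lt => [|x l] //= i_lt; rewrite rot1_cons nth_rcons.
case: ltnP => i_size; first by rewrite modn_small ?addn1.
have -> : i = size l by lia.
by rewrite eqxx addn1 modnn.
Qed.

Lemma all_cyc_steps (P : pred (T * T)) c :
  all P (cyc_steps c) = cycle (fun x y => P (x, y)) c.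
Proof.
case: c => [|x l] //; rewrite /cyc_steps rot1_cons /=.
elim: l {1 3}x => [|y l IHl] z //=.
by rewrite IHl.
Qed.

Lemma sorted_cyc_steps c : sorted (fun p q : T * T => p.2 == q.1) (cyc_steps c).
Proof.
case: c => [|y l] //; rewrite /cyc_steps rot1_cons.
elim: l {1}y => [|z l IHl] x //=.
by case: l IHl => [|w l] /= IHl; rewrite eqxx //= IHl.
Qed.

Lemma sum_cyc_steps_snd (F : T -> nat) c :
  \sum_(p <- cyc_steps c) F p.2 = \sum_(p <- cyc_steps c) F p.1.
Proof.
rewrite -(big_map snd xpredT F) -(big_map fst xpredT F).
have -> : map snd (cyc_steps c) = rot 1 c by apply: unzip2_zip; rewrite size_rot.
have -> : map fst (cyc_steps c) = c by apply: unzip1_zip; rewrite size_rot.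
by apply/perm_big; rewrite perm_rot.
Qed.

Lemma sum_cyc_steps_mod (F : T -> nat) (u v : T * T -> nat) m c :
  (forall p, p \in cyc_steps c -> F p.2 + u p = F p.1 + v p %[mod m]) ->
  \sum_(p <- cyc_steps c) u p = \sum_(p <- cyc_steps c) v p %[mod m].
Proof.
move=> step_mod; apply/eqP.
rewrite -(eqn_modDl (\sum_(p <- cyc_steps c) F p.2)).
rewrite {2}sum_cyc_steps_snd -!big_split /= -modn_summ -[X in _ == X]modn_summ.
by rewrite (eq_big_seq _ step_mod).
Qed.

Lemma uniq_cyc_steps_pairwise x0 c : uniq c -> 2 < size c ->
  pairwise (fun p q => (p.1 != q.1) && (p != (q.2, q.1))) (cyc_steps c).
Proof.
move=> c_uniq c_size; apply/(pairwiseP (x0, x0)) => i j.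
rewrite !inE /= size_cyc_steps => i_lt j_lt ij.
rewrite !nth_cyc_steps //= xpair_eqE !nth_uniq //; try (apply: ltn_pmod; lia).
by rewrite !modn_lt_double; try lia; case: ifP; case: ifP; lia.
Qed.

Lemma uniq_cycle_links (E A : rel T) c : uniq c -> 2 < size c ->
  pairwise (fun p q => ~~ same_link E A p q) (cyc_steps c).
Proof.
case: c => [|x0 l] // c_uniq c_size.
apply: (sub_pairwise _ (uniq_cyc_steps_pairwise x0 c_uniq c_size)) => p q.
case/andP=> tails rev; apply/negP; rewrite /same_link.
case/orP=> [/andP[_ /eqP pq]|/andP[_ /orP[/eqP pq|/eqP pq]]];
  [by rewrite pq eqxx in tails|by rewrite pq eqxx in tails|by rewrite pq eqxx in rev].
Qed.

End CycleSteps.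

Section Circulant.
Variables m a : nat.
Hypotheses (a_gt1 : 1 < a) (a_lt : a.+1 < m) (a_double : 2 * a != m).

Local Notation E := (circ_edge m).
Local Notation A := (circ_arc m a).

Let m_gt0 : 0 < m. Proof. lia. Qed.

Lemma circ_mixed_graph : mixed_graph E A.
Proof.
split=> [x y|x|x|x y|x y]; rewrite /circ_edge /circ_arc ?orbb;
  move: (ltn_ord x) => ?; try move: (ltn_ord y) => ?; reduce_mod m; lia.
Qed.

Lemma circ_arc_out x : #|[set y | A x y]| = 1.
Proof.
rewrite (_ : [set y | A x y] = [set Ordinal (ltn_pmod (x + a) m_gt0)]) ?cards1 //.
by apply/setP => y; rewrite !inE -val_eqE.
Qed.

Lemma circ_arc_in x : #|[set y | A y x]| = 1.
Proof.
rewrite (_ : [set y | A y x] = [set Ordinal (ltn_pmod (x + (m - a)) m_gt0)]) ?cards1 //.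
apply/setP => y; rewrite !inE -val_eqE /= /circ_arc.
move: (ltn_ord x) (ltn_ord y) => ? ?; reduce_mod m; lia.
Qed.

Lemma circ_edge_deg x : #|[set y | E x y]| = 2.
Proof.
rewrite (_ : [set y | E x y] = [set Ordinal (ltn_pmod (x + 1) m_gt0);
                                   Ordinal (ltn_pmod (x + (m - 1)) m_gt0)]).
  by rewrite cards2 -val_eqE /=; move: (ltn_ord x) => ?; reduce_mod m; lia.
apply/setP => y; rewrite !inE -!val_eqE /= /circ_edge.
move: (ltn_ord x) (ltn_ord y) => ? ?; reduce_mod m; lia.
Qed.

Definition arc_step (p : 'I_m * 'I_m) : bool := A p.1 p.2.
Definition up_step (p : 'I_m * 'I_m) : bool := val p.2 == (p.1 + 1) %% m.
Definition fwd_step p := ~~ arc_step p && up_step p.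
Definition bwd_step p := ~~ arc_step p && ~~ up_step p.

Lemma circ_step_mod p : step_ok E A p ->
  p.2 + bwd_step p = p.1 + (a * arc_step p + fwd_step p) %[mod m].
Proof.
case: p => x y; rewrite /step_ok /bwd_step /fwd_step /arc_step /up_step /=.
rewrite /circ_arc /circ_edge; move: (ltn_ord x) (ltn_ord y) => ? ?.
case arc: (_ == (x + a) %% m); case up: (_ == (x + 1) %% m);
  rewrite /= ?muln0 ?muln1 ?addn0 ?orbT //= => edge;
  move: arc up edge; reduce_mod m; lia.
Qed.

Lemma circ_cycle_mod c : all (step_ok E A) (cyc_steps c) ->
  \sum_(p <- cyc_steps c) bwd_step p =
  a * \sum_(p <- cyc_steps c) arc_step p + \sum_(p <- cyc_steps c) fwd_step p %[mod m].
Proof.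
move=> /allP steps_ok; rewrite big_distrr -big_split /=.
apply: (@sum_cyc_steps_mod _ (fun x : 'I_m => val x)) => p /steps_ok.
exact: circ_step_mod.
Qed.

Lemma circ_edges_no_uturn p q : p.2 = q.1 -> E p.1 p.2 -> E q.1 q.2 ->
  ~~ same_link E A p q -> up_step p = up_step q.
Proof.
case: p q => [x y] [z w] /= <- xy yw; apply: contraNeq => turn.
have xw : x = w.
  apply: val_inj; move: xy yw turn; rewrite /circ_edge /up_step /=.
  move: (ltn_ord x) (ltn_ord y) (ltn_ord w) => ? ? ?; reduce_mod m; lia.
by rewrite /same_link /= -xw xy eqxx !orbT.
Qed.

Lemma circ_edge_walk_one_way (s : seq ('I_m * 'I_m)) :
  sorted (fun p q => p.2 == q.1) s -> pairwise (fun p q => ~~ same_link E A p q) s ->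
  all (fun p => E p.1 p.2) s -> all up_step s || all (predC up_step) s.
Proof.
elim: s => [|p [|q s] IHs] //=; first by case: up_step.
case/andP=> /eqP pq linked; case/andP=> /andP[new_pq _] distinct.
case/and3P=> edge_p edge_q edges.
have := IHs linked distinct; rewrite /= edge_q edges => /(_ isT).
by rewrite (circ_edges_no_uturn pq edge_p edge_q new_pq); case: up_step.
Qed.

End Circulant.

Lemma short_displacement_mod k a p q : 0 < k -> 0 < a + p + q < 2 * k + 1 ->
  (a = 0 -> p = 0 \/ q = 0) ->
  q = (2 * k + 1) * a + p %[mod 2 * k * k + 2 * k + 1] -> False.
Proof.
move=> k_gt0 /andP[nontrivial short] one_way.
set m := 2 * k * k + 2 * k + 1.
rewrite (modn_small (_ : q < m)); last by rewrite /m; nia.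
have [a0|a_gt0] := posnP a.
  by rewrite a0 modn_small; [case: (one_way a0); lia | rewrite /m; nia].
have [small|big] := ltnP ((2 * k + 1) * a + p) m.
  by rewrite modn_small //; nia.
rewrite -(subnK big) modnDr modn_small; last by rewrite /m; nia.
have [le_ak|lt_ka] := leqP a k; first nia.
have : k * (k + 1) <= k * a by rewrite leq_mul2l; lia.
nia.
Qed.

Section CirculantGirth.
Variables k m g : nat.
Hypotheses (k_gt0 : 0 < k) (g_def : g = 2 * k + 1) (m_def : m = 2 * k * k + 2 * k + 1).

Local Notation E := (circ_edge m).
Local Notation A := (circ_arc m g).

Let g_gt1 : 1 < g. Proof. lia. Qed.
Let g_lt : g.+1 < m. Proof. nia. Qed.
Let g_double : 2 * g != m. Proof. lia. Qed.
Lemma girth_m_gt0 : 0 < m. Proof. lia. Qed.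

Lemma circ_girth_lb c : is_cycle E A c -> g <= size c.
Proof.
case=> c_pos _ steps_ok distinct.
have := circ_cycle_mod g_gt1 g_lt g_double steps_ok.
set na := \sum_(p <- _) arc_step _ p.
set nf := \sum_(p <- _) fwd_step _ p.
set nb := \sum_(p <- _) bwd_step _ p.
move=> displacement.
have total : na + nf + nb = size c.
  rewrite -(size_cyc_steps c) -sum1_size -!big_split /=.
  by apply: eq_bigr => p _; rewrite /fwd_step /bwd_step; case: arc_step; case: up_step.
have one_way : na = 0 -> nf = 0 \/ nb = 0.
  move/eqP; rewrite sum_nat_seq_eq0 => /allP no_arc.
  have edges : all (fun p => E p.1 p.2) (cyc_steps c).
    apply/allP => p p_in; move: (allP steps_ok p p_in) (no_arc p p_in).
    by rewrite /step_ok /arc_step; case: (A _ _); rewrite ?orbF.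
  case/orP: (circ_edge_walk_one_way g_gt1 g_lt g_double (sorted_cyc_steps c) distinct edges)
    => /allP one_dir; [right|left]; apply/eqP; rewrite sum_nat_seq_eq0;
    apply/allP => p /one_dir up_p.
  - by rewrite /bwd_step up_p andbF.
  - by rewrite /fwd_step (negbTE up_p) andbF.
rewrite leqNgt; apply/negP => short.
by apply: (short_displacement_mod k_gt0 _ one_way); rewrite -?m_def -?g_def; lia.
Qed.

Definition girth_vertex j := if j <= k then j * g else k * g + (j - k).

Lemma girth_vertex_succ j : girth_vertex j.+1 = girth_vertex j + (if j < k then g else 1).
Proof. by rewrite /girth_vertex; case: (ltngtP j k) => jk; rewrite ?mulSn; lia. Qed.

Lemma girth_vertex_mono : {mono girth_vertex : i j / i <= j}.
Proof.
apply/leq_mono/(homo_ltn ltn_trans) => j.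
by rewrite girth_vertex_succ -addn1 leq_add2l; case: ifP; lia.
Qed.

Lemma girth_vertex_last : girth_vertex (2 * k) = m.-1.
Proof. by rewrite /girth_vertex ifN; lia. Qed.

Lemma girth_vertex_lt j : j <= 2 * k -> girth_vertex j < m.
Proof. by rewrite -girth_vertex_mono girth_vertex_last; lia. Qed.

Definition girth_vertex_ord j : 'I_m := Ordinal (ltn_pmod (girth_vertex j) girth_m_gt0).
Definition girth_cycle : seq 'I_m := map girth_vertex_ord (iota 0 g).

Lemma val_girth_vertex_ord j : j <= 2 * k -> val (girth_vertex_ord j) = girth_vertex j.
Proof. by move/girth_vertex_lt/modn_small. Qed.

Lemma size_girth_cycle : size girth_cycle = g.
Proof. by rewrite size_map size_iota. Qed.

Lemma uniq_girth_cycle : uniq girth_cycle.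
Proof.
rewrite map_inj_in_uniq ?iota_uniq // => i j; rewrite !mem_iota g_def => i_lt j_lt.
move/(congr1 val); rewrite !val_girth_vertex_ord; try lia.
exact: incn_inj girth_vertex_mono i j.
Qed.

Lemma girth_cycle_steps : all (step_ok E A) (cyc_steps girth_cycle).
Proof.
rewrite all_cyc_steps /girth_cycle cycle_map.
have -> : iota 0 g = iota 0 (2 * k).+1 by rewrite g_def addn1.
rewrite cycle_iota add0n; apply/andP; split.
  apply/allP => j; rewrite mem_iota => /andP[_ j_lt] /=.
  have := girth_vertex_lt j_lt; rewrite /step_ok /circ_edge /circ_arc /=.
  rewrite !(modn_small (girth_vertex_lt _)) ?girth_vertex_succ; try lia.
  by case: ifP => _ lt; rewrite (modn_small lt) eqxx ?orbT.
rewrite /= /step_ok /circ_edge /= !(modn_small (girth_vertex_lt _)) ?girth_vertex_last //; try lia.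
by rewrite [m.-1 + 1]addn1 prednK ?girth_m_gt0 // modnn /girth_vertex mul0n.
Qed.

Lemma girth_cycle_is_cycle : is_cycle E A girth_cycle.
Proof.
split; rewrite ?size_girth_cycle ?uniq_girth_cycle ?girth_cycle_steps //; first lia.
by apply: uniq_cycle_links; rewrite ?uniq_girth_cycle ?size_girth_cycle //; lia.
Qed.

Lemma circ_zrg_mixed_graph : zrg_mixed_graph E A 1 2 g.
Proof.
split.
- exact: circ_mixed_graph g_gt1 g_lt g_double.
- exact: circ_arc_out g_gt1 g_lt g_double.
- exact: circ_arc_in g_gt1 g_lt g_double.
- exact: circ_edge_deg g_gt1 g_lt g_double.
- split; last exact: circ_girth_lb.
  by exists girth_cycle; rewrite size_girth_cycle; split; first exact: girth_cycle_is_cycle.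
Qed.

End CirculantGirth.

Theorem lemma5 (g : nat) (hg : 3 <= g) (hodd : odd g) :
  zrg_mixed_graph (circ_edge ((g ^ 2 + 1) %/ 2)) (circ_arc ((g ^ 2 + 1) %/ 2) g) 1 2 g
  /\ #|'I_((g ^ 2 + 1) %/ 2)| = (g ^ 2 + 1) %/ 2.
Proof.
split; last by rewrite card_ord.
have g_def : g = 2 * g./2 + 1 by rewrite -{1}(odd_double_half g) hodd; lia.
have m_def : (g ^ 2 + 1) %/ 2 = 2 * g./2 * g./2 + 2 * g./2 + 1.
  by rewrite {1}g_def (_ : _ + 1 = (2 * g./2 * g./2 + 2 * g./2 + 1) * 2) ?mulnK //; nia.
apply: circ_zrg_mixed_graph g_def m_def; lia.
Qed.
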